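(* Let $t\in[n]$, let $S\subseteq N$ be $t$-switchable, and suppose $a,b$ are connected in $S$ via a path $a_0=a,a_1,\dots,a_k=b$ in $S$. Let $L\subseteq[t]$ and $i,j\in\{0,\dots,k\}$. Then ${\rm s}(L,a_i,a_j)\in S$, and ${\rm s}(L,a_i,a_j)$ is connected to $a$ in $S$.
   Context: Fix positive integers $n, r_1,\dots,r_n$ and let $N=[r_1]\times\cdots\times[r_n]$. For $L\subseteq[n]$ and $a,b\in N$, ${\rm s}(L,a,b)\in N$ has $i$-th component $b_i$ if $i\in L$ and $a_i$ otherwise; ${\rm s}(i,a,b)={\rm s}(\{i\},a,b)$. Let $d(a,b)=\#\{j: a_j\neq b_j\}$. A subset $S\subseteq N$ is $t$-switchable if for all $a,b\in S$ with $d(a,b)=2$ and all $i\in[t]$, ${\rm s}(i,a,b)\in S$. A path in $S$ from $a$ to $b$ is a sequence $a_0=a,\dots,a_k=b$ of elements of $S$ with $a_{j-1}$ and $a_j$ differing in at most one component for all $j$; $a,b$ are connected in $S$ if such a path exists. *)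

From mathcomp Require Import all_boot.
Set Implicit Arguments. Unset Strict Implicit. Unset Printing Implicit Defensive.

(* Components are indexed by 'I_n (i.e. [n] shifted to {0,..,n-1});
   the i-th component ranges over 'I_(r i) (i.e. [r_i] shifted). *)
Definition pt (n : nat) (r : 'I_n -> nat) := {dffun forall i : 'I_n, 'I_(r i)}.

Definition sw n (r : 'I_n -> nat) (L : {set 'I_n}) (a b : pt r) : pt r :=
  @finfun _ (fun i => 'I_(r i)) (fun i => if i \in L then b i else a i).

Definition dist n (r : 'I_n -> nat) (a b : pt r) : nat := #|[set i | a i != b i]|.

Definition switchable n (r : 'I_n -> nat) (t : nat) (S : {set pt r}) : Prop :=
  forall a b, a \in S -> b \in S -> dist a b = 2 ->
  forall i : 'I_n, i < t -> sw [set i] a b \in S.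

Definition is_path n (r : 'I_n -> nat) (S : {set pt r}) (k : nat)
  (p : nat -> pt r) (a b : pt r) : Prop :=
  p 0 = a /\ p k = b /\ (forall j, j <= k -> p j \in S) /\
  (forall j, 0 < j <= k -> dist (p j.-1) (p j) <= 1).

Definition connected n (r : 'I_n -> nat) (S : {set pt r}) (a b : pt r) : Prop :=
  exists k p, @is_path n r S k p a b.

From mathcomp Require Import all_boot.

Set Implicit Arguments.
Unset Strict Implicit.
Unset Printing Implicit Defensive.

(* Write q(i,j) for s(L,a_i,a_j).  A switch s(L,x,y) with d(x,y) <= 2 and
   L inside [t] is either x, y, or a single switch s(l,x,y) with d(x,y) = 2,
   so it stays in S.  Since s(L, q(i,j'), q(i',j)) = q(i,j) and
   d(q(i,j'), q(i',j)) <= d(a_i,a_i') + d(a_j',a_j), every q(i,j) with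
   |i - j| = d + 1 is such a switch of two points q(.,.) with |i - j| = d,
   which gives membership by induction on |i - j|.  Connectedness holds
   because q(i,.) moves by at most one coordinate per step along the path
   and q(i,i) = a_i. *)

Section Switch.

Variables (n : nat) (r : 'I_n -> nat).
Implicit Types (L : {set 'I_n}) (a b x y : pt r).

Lemma swE L a b w : sw L a b w = if w \in L then b w else a w.
Proof. by rewrite ffunE. Qed.

Lemma sw_id L a : sw L a a = a.
Proof. by apply/ffunP => w; rewrite swE if_same. Qed.

Lemma sw0 a b : sw set0 a b = a.
Proof. by apply/ffunP => w; rewrite swE inE. Qed.

Lemma swT a b : sw setT a b = b.
Proof. by apply/ffunP => w; rewrite swE inE. Qed.

Lemma sw_sw L a a' b b' : sw L (sw L a b') (sw L a' b) = sw L a b.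
Proof. by apply/ffunP => w; rewrite !swE; case: (w \in L). Qed.

Lemma eq_sw L L' a b :
  {in [set w | a w != b w], L =i L'} -> sw L a b = sw L' a b.
Proof.
move=> eqLL'; apply/ffunP => w; rewrite !swE.
have [-> | abw] := eqVneq (a w) (b w); first by rewrite !if_same.
by rewrite eqLL' // inE.
Qed.

Lemma distC a b : dist a b = dist b a.
Proof. by apply: eq_card => w; rewrite !inE eq_sym. Qed.

Lemma dist_xx a : dist a a = 0.
Proof. by apply: eq_card0 => w; rewrite inE eqxx. Qed.

Lemma dist_sw L a a' b b' :
  dist (sw L a b') (sw L a' b) <= dist a a' + dist b' b.
Proof.
apply: leq_trans (leq_card_setU _ _); apply: subset_leq_card.
apply/subsetP => w; rewrite !inE !swE.
by case: (w \in L) => /= ->; rewrite ?orbT.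
Qed.

Lemma connected_refl (S : {set pt r}) a : a \in S -> connected S a a.
Proof.
move=> aS; exists 0, (fun=> a); by do 3!split=> //; case.
Qed.

Lemma connected_cons (S : {set pt r}) a b c :
  a \in S -> dist a b <= 1 -> connected S b c -> connected S a c.
Proof.
move=> aS dab [k [p [p0 [pk [pS pd]]]]].
exists k.+1, (fun m => if m is m'.+1 then p m' else a); do 3!split=> //.
  by case=> // j /pS.
by case=> [|[|j]] //= jk; [rewrite p0 | apply: (pd j.+1)].
Qed.

End Switch.

Section Chain.

Variables (n : nat) (r : 'I_n -> nat) (S : {set pt r}) (k : nat).
Variable f : nat -> pt r.
Hypothesis f_in : forall m, m <= k -> f m \in S.
Hypothesis f_step : forall m, m < k -> dist (f m) (f m.+1) <= 1.

Lemma connected_chain x y c :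
  x <= k -> y <= k -> connected S (f y) c -> connected S (f x) c.
Proof.
have down d m : m + d <= k -> connected S (f (m + d)) c -> connected S (f m) c.
  elim: d m => [|d IH] m; rewrite ?addn0 // addnS => mdk fc.
  have mk : m < k by rewrite (leq_ltn_trans (leq_addr d m)).
  by apply: connected_cons (f_in (ltnW mk)) (f_step mk) (IH m.+1 _ _); rewrite addSn.
have up d m : m + d <= k -> connected S (f m) c -> connected S (f (m + d)) c.
  elim: d => [|d IH]; rewrite ?addn0 // addnS => mdk fc.
  apply: connected_cons (f_in mdk) _ (IH (ltnW mdk) fc).
  by rewrite distC f_step.
move=> xk yk fc; case: (leqP x y) => [/subnKC yE | /ltnW /subnKC xE].
  by apply: (down (y - x)); rewrite yE.
by rewrite -xE; apply: up => //; rewrite xE.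
Qed.

End Chain.

Section Switchable.

Variables (n : nat) (r : 'I_n -> nat) (t : nat) (S : {set pt r}).
Hypothesis hS : switchable t S.
Variable L : {set 'I_n}.
Hypothesis hL : forall l, l \in L -> l < t.

Lemma sw_mem x y : x \in S -> y \in S -> dist x y <= 2 -> sw L x y \in S.
Proof.
move=> xS yS dxy; set D := [set w | x w != y w].
case: (pickP [pred w | (w \in D) && (w \in L)]) => [w1 /andP [w1D w1L] | noDL].
  case: (pickP [pred w | (w \in D) && (w \notin L)]) => [w2 /andP [w2D w2L] | noDnL].
    have w12 : w1 != w2 by apply: contraNneq w2L => <-.
    have D12 : D = [set w1; w2].
      apply/eqP; rewrite eq_sym eqEcard cards2 w12 dxy andbT.
      by apply/subsetP => w /set2P [] ->.
    rewrite (@eq_sw _ _ L [set w1]).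
      by apply: hS; rewrite // ?hL // /dist -/D D12 cards2 w12.
    move=> w; rewrite -/D D12 !inE => /orP [] /eqP ->; first by rewrite w1L eqxx.
    by rewrite (negbTE w2L) eq_sym (negbTE w12).
  rewrite (@eq_sw _ _ L setT) ?swT // => w wD.
  by move: (noDnL w); rewrite /= wD inE => /negbFE.
rewrite (@eq_sw _ _ L set0) ?sw0 // => w wD.
by move: (noDL w); rewrite /= wD inE.
Qed.

Variables (k : nat) (p : nat -> pt r).
Hypothesis p_in : forall m, m <= k -> p m \in S.
Hypothesis p_step : forall m, m < k -> dist (p m) (p m.+1) <= 1.

Lemma sw_path_mem i j : i <= k -> j <= k -> sw L (p i) (p j) \in S.
Proof.
have diag d m : m + d <= k ->
    sw L (p m) (p (m + d)) \in S /\ sw L (p (m + d)) (p m) \in S.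
  elim: d m => [|d IH] m; first by rewrite addn0 sw_id => /p_in ->.
  rewrite addnS => mdk; have mk : m < k by rewrite (leq_ltn_trans (leq_addr d m)).
  have [lo_in lo_in'] := IH m (ltnW mdk).
  have [hi_in hi_in'] : sw L (p m.+1) (p (m + d).+1) \in S /\
                        sw L (p (m + d).+1) (p m.+1) \in S.
    by rewrite -addSn; apply: IH; rewrite addSn.
  have steps2 : dist (p m) (p m.+1) + dist (p (m + d)) (p (m + d).+1) <= 2.
    by rewrite (leq_add (p_step mk) (p_step mdk)).
  split.
    rewrite -(sw_sw L (p m) (p m.+1) (p (m + d).+1) (p (m + d))).
    by apply: sw_mem => //; apply: leq_trans (dist_sw _ _ _ _ _) steps2.
  rewrite -(sw_sw L (p (m + d).+1) (p (m + d)) (p m) (p m.+1)).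
  apply: sw_mem => //; apply: leq_trans (dist_sw _ _ _ _ _) _.
  by rewrite distC (distC (p m.+1)) addnC.
move=> ik jk; case: (leqP i j) => [/subnKC jE | /ltnW /subnKC iE].
  by rewrite -jE; case: (diag (j - i) i); rewrite jE.
by rewrite -iE; case: (diag (i - j) j); rewrite iE.
Qed.

End Switchable.

Theorem lemma3p5 (n : nat) (r : 'I_n -> nat) (hr : forall i, 0 < r i)
  (t : nat) (ht : 1 <= t <= n) (S : {set pt r}) (hS : switchable t S)
  (a b : pt r) (k : nat) (p : nat -> pt r) (hp : is_path S k p a b)
  (L : {set 'I_n}) (hL : forall l, l \in L -> l < t)
  (i j : nat) (hi : i <= k) (hj : j <= k) :
  sw L (p i) (p j) \in S /\ connected S (sw L (p i) (p j)) a.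
Proof.
case: hp => [p0 [_ [p_in p_dist]]].
have p_step m : m < k -> dist (p m) (p m.+1) <= 1 by move=> mk; apply: (p_dist m.+1).
have q_in m : m <= k -> sw L (p i) (p m) \in S.
  by move=> mk; apply: (sw_path_mem hS hL p_in p_step hi mk).
split; first exact: q_in.
have pi_a : connected S (p i) a.
  apply: (connected_chain p_in p_step hi (leq0n k)).
  by rewrite p0; apply: connected_refl; rewrite -p0 p_in.
apply: (connected_chain q_in _ hj hi); last by rewrite sw_id.
move=> m mk; apply: leq_trans (dist_sw _ _ _ _ _) _.
by rewrite dist_xx p_step.
Qed.
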